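(* Let $\{c_n\}_{n\ge1}$ be a real sequence, $\{d_{n+1}\}_{n\ge1}$ a positive chain sequence, and let $P_0(x)=1$, $P_1(x)=x-c_1$, $P_{n+1}(x)=(x-c_{n+1})P_n(x)-d_{n+1}(x^2+1)P_{n-1}(x)$ for $n\ge1$. Let $u_0(x)=1$, $u_n(x)=\dfrac{(-1)^n}{(x-i)^n\prod_{j=1}^n\sqrt{d_{j+1}}}P_n(x)$ for $n\ge1$, $\mathbf u_n(x)=[u_0(x),\dots,u_{n-1}(x)]^T$, and let $\mathbf B_n$ be the $n\times n$ real symmetric tridiagonal matrix with diagonal entries $1$ and $(\mathbf B_n)_{k,k+1}=(\mathbf B_n)_{k+1,k}=\sqrt{d_{k+1}}$, $k=1,\dots,n-1$. For real $x\ne y$ let \[ G_n(x,y)=\frac{P_n(x)P_{n-1}(y)-P_{n-1}(x)P_n(y)}{x-y},\qquad n\ge1, \] and let $\mathcal G_n(x)=P_n'(x)P_{n-1}(x)-P_{n-1}'(x)P_n(x)$. Then $G_1(x,y)=1$ and, for $n\ge2$ and real $x\neq y$, \[ \frac{G_n(x,y)}{(x-i)^{n-1}(y+i)^{n-1}d_2d_3\cdots d_n}=\mathbf u_n(y)^H\mathbf B_n\mathbf u_n(x). \] Moreover, for $n\ge2$ and all real $x$, \[ \frac{\mathcal G_n(x)}{(x^2+1)^{n-1}d_2d_3\cdots d_n}=\mathbf u_n(x)^H\mathbf B_n\mathbf u_n(x)>0 . \]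
   Context: A sequence $\{d_{n+1}\}_{n\ge1}$ is a positive chain sequence if there is a sequence $\{g_{n+1}\}_{n\ge0}$ with $0\le g_1<1$, $0<g_n<1$ for $n\ge2$, and $d_{n+1}=(1-g_n)g_{n+1}$ for $n\ge1$. $\mathbf v^H$ denotes the conjugate transpose. *)

From HB Require Import structures.
From mathcomp Require Import all_boot all_order all_algebra.
From mathcomp Require Import complex.
From mathcomp Require Import reals.
Set Implicit Arguments. Unset Strict Implicit. Unset Printing Implicit Defensive.
Import Order.TTheory GRing.Theory Num.Theory.
Local Open Scope ring_scope.
Local Open Scope complex_scope.

Definition positive_chain_seq (R : realType) (d : nat -> R) : Prop :=
  exists g : nat -> R,
    [/\ 0 <= g 1%N, g 1%N < 1,
        (forall n, (2 <= n)%N -> 0 < g n /\ g n < 1) &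
        (forall n, (1 <= n)%N -> d n.+1 = (1 - g n) * g n.+1)].

(* Ppair c d n = (P_n, P_{n+1}) *)
Fixpoint Ppair (R : realType) (c d : nat -> R) (n : nat) : {poly R} * {poly R} :=
  match n with
  | 0%N => (1, 'X - (c 1%N)%:P)
  | m.+1 => let pr := Ppair c d m in
            (pr.2, ('X - (c m.+2)%:P) * pr.2 - (d m.+2)%:P * ('X^2 + 1) * pr.1)
  end.

Definition Ppoly (R : realType) (c d : nat -> R) (n : nat) : {poly R} :=
  (Ppair c d n).1.

Definition Gker (R : realType) (c d : nat -> R) (n : nat) (x y : R) : R :=
  ((Ppoly c d n).[x] * (Ppoly c d n.-1).[y]
   - (Ppoly c d n.-1).[x] * (Ppoly c d n).[y]) / (x - y).

Definition calG (R : realType) (c d : nat -> R) (n : nat) (x : R) : R :=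
  (Ppoly c d n)^`().[x] * (Ppoly c d n.-1).[x]
  - (Ppoly c d n.-1)^`().[x] * (Ppoly c d n).[x].

Definition ufun (R : realType) (c d : nat -> R) (k : nat) (x : R) : R[i] :=
  if k is 0%N then 1 else
  (-1) ^+ k / ((x%:C - 'i) ^+ k * (\prod_(1 <= j < k.+1) Num.sqrt (d j.+1))%:C)
  * ((Ppoly c d k).[x])%:C.

Definition uvec (R : realType) (c d : nat -> R) (n : nat) (x : R) : 'cV[R[i]]_n :=
  \col_(k < n) ufun c d k x.

Definition Bmat (R : realType) (d : nat -> R) (n : nat) : 'M[R]_n :=
  \matrix_(k < n, l < n)
    if k == l then 1
    else if (k.+1 == l) then Num.sqrt (d k.+2)
    else if (l.+1 == k) then Num.sqrt (d l.+2)
    else 0.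

Definition herm_form (R : realType) (n : nat) (v : 'cV[R[i]]_n) (M : 'M[R]_n)
  (w : 'cV[R[i]]_n) : R[i] :=
  ((map_mx (fun z => z^*) v)^T *m map_mx (fun r => r%:C) M *m w) 0 0.

From HB Require Import structures.
From mathcomp Require Import all_boot all_order all_algebra.
From mathcomp Require Import complex.
From mathcomp Require Import reals.
From mathcomp Require Import ring zify.
Import Order.TTheory GRing.Theory Num.Theory.
Local Open Scope ring_scope.
Local Open Scope complex_scope.
Set Implicit Arguments. Unset Strict Implicit. Unset Printing Implicit Defensive.

(* Let K_n be G_n(x, y) or calG_n(x).  The three-term recurrence gives
     K_(n+1) = (x - i)(y + i) d_(n+1) K_n + P_n(x) P_n(y)
               - d_(n+1) ((y + i) P_(n-1)(y) P_n(x) + (x - i) P_(n-1)(x) P_n(y)),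
   whose real part is the recurrence itself and whose imaginary part is the
   definition of K_n.  Bordering the tridiagonal form u_n(y)^H B_n u_n(x) by one
   row and column yields the same recursion once rescaled by
   (x - i)^(n-1) (y + i)^(n-1) d_2 ... d_n, so both sides agree by induction.
   Positivity is Wall's chain-sequence argument: since
   sqrt d_(m+2) = sqrt (1 - g_(m+1)) sqrt g_(m+2), the new cross terms complete a
   square, so that H_m = u_m(x)^H B_m u_m(x) satisfies
   H_(m+1) - (1 - g_(m+1)) |u_m(x)|^2 >= 0 for all m, and H_(m+1) > 0. *)

(* [conjc_real] is stated for [conjc]; this form rewrites under [Num.conj]. *)
Lemma conjC_real_complex (R : rcfType) (x : R) : (x%:C)^*%R = x%:C :> R[i].
Proof. exact: conjc_real. Qed.

Lemma real_complex_subi_neq0 (R : rcfType) (x : R) : x%:C - 'i != 0 :> R[i].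
Proof. by rewrite eq_complex /= sub0r oppr_eq0 oner_eq0 andbF. Qed.

Lemma real_complex_addi_neq0 (R : rcfType) (x : R) : x%:C + 'i != 0 :> R[i].
Proof. by rewrite eq_complex /= add0r oner_eq0 andbF. Qed.

Lemma real_complex_sqrD1 (R : rcfType) (x : R) :
  (x ^+ 2 + 1)%:C = (x%:C - 'i) * (x%:C + 'i) :> R[i].
Proof. by apply/eqP; rewrite eq_complex /=; apply/andP; split; apply/eqP; ring. Qed.

Lemma complex_kernel_rec (R : rcfType) (x y e K K' p0 p1 q0 q1 : R) :
  K' = (x * y + 1) * e * K + p1 * q1 - e * (y * (q0 * p1) + x * (p0 * q1)) ->
  (x - y) * K = q0 * p1 - p0 * q1 ->
  K'%:C = (x%:C - 'i) * (y%:C + 'i) * e%:C * K%:C + (p1 * q1)%:C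
          - e%:C * ((y%:C + 'i) * (q0 * p1)%:C + (x%:C - 'i) * (p0 * q1)%:C).
Proof.
move=> -> cross; apply/eqP; rewrite eq_complex /=; apply/andP; split; apply/eqP.
  by ring.
transitivity (e * ((x - y) * K - (q0 * p1 - p0 * q1))); last by ring.
by rewrite cross subrr mulr0.
Qed.

Lemma conjC_cross_sqrtE (R : rcfType) (al be : R) (a b : R[i]) :
  0 <= al -> 0 <= be ->
  let w := (Num.sqrt al)%:C * a + (Num.sqrt be)%:C * b in
  b^* * b + (Num.sqrt (al * be))%:C * (a^* * b + b^* * a)
  = (w^* * w - al%:C * (a^* * a)) + (1 - be)%:C * (b^* * b).
Proof.
move=> al_ge0 be_ge0; rewrite sqrtrM //.
move: (sqr_sqrtr al_ge0) (sqr_sqrtr be_ge0).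
move: (Num.sqrt al) (Num.sqrt be) => ra rb <- <-.
case: a b => [a1 a2] [b1 b2]; apply/eqP; rewrite eq_complex /=.
by apply/andP; split; apply/eqP; ring.
Qed.

Section TridiagonalForm.
Variables (R : rcfType) (d : nat -> R).

Definition Bentry (k l : nat) : R :=
  if k == l then 1 else if k.+1 == l then Num.sqrt (d k.+2)
  else if l.+1 == k then Num.sqrt (d l.+2) else 0.

Definition tridiag_form (u v : nat -> R[i]) (n : nat) : R[i] :=
  \sum_(0 <= l < n) \sum_(0 <= k < n) u k * (Bentry k l)%:C * v l.

Lemma Bentry_sym k l : Bentry k l = Bentry l k.
Proof.
rewrite /Bentry; case: (eqVneq k l) => [//|_].
case: (eqVneq k.+1 l) => [<-|_]; first by rewrite ifN // gtn_eqF.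
by case: ifP.
Qed.

Lemma sum_Bentry_last (h : nat -> R[i]) m :
  \sum_(0 <= k < m.+1) (Bentry k m.+1)%:C * h k = (Num.sqrt (d m.+2))%:C * h m.
Proof.
rewrite big_nat_recr //= big1_seq ?add0r; last first.
  move=> k /andP[_]; rewrite mem_index_iota => /andP[_ lt_km].
  rewrite /Bentry !ifN ?mul0r //; apply/negP => /eqP; lia.
by rewrite /Bentry ifN ?eqxx // eqn_leq ltnn andbF.
Qed.

Lemma tridiag_form1 u v : tridiag_form u v 1 = u 0%N * v 0%N.
Proof. by rewrite /tridiag_form !big_nat1 /Bentry eqxx mulr1. Qed.

Lemma tridiag_formSS u v m : tridiag_form u v m.+2 =
  tridiag_form u v m.+1 + u m.+1 * v m.+1
  + (Num.sqrt (d m.+2))%:C * (u m * v m.+1 + u m.+1 * v m).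
Proof.
set s := (Num.sqrt (d m.+2))%:C.
have row : \sum_(0 <= l < m.+1) u m.+1 * (Bentry m.+1 l)%:C * v l = u m.+1 * (s * v m).
  rewrite -sum_Bentry_last big_distrr; apply: eq_bigr => l _.
  by rewrite Bentry_sym -mulrA.
have col : \sum_(0 <= k < m.+1) u k * (Bentry k m.+1)%:C * v m.+1 = s * u m * v m.+1.
  rewrite -sum_Bentry_last big_distrl; apply: eq_bigr => k _.
  by rewrite (mulrC (u k)).
rewrite {1}/tridiag_form big_nat_recr //=.
under eq_bigr do rewrite big_nat_recr //=.
rewrite big_split /= -/(tridiag_form u v m.+1) row.
rewrite [\sum_(0 <= k < m.+2) _]big_nat_recr //= col /Bentry eqxx mulr1 -/s.
ring.
Qed.

Definition dprod (n : nat) : R := \prod_(2 <= j < n.+1) d j.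
Definition sqrt_dprod (k : nat) : R := \prod_(1 <= j < k.+1) Num.sqrt (d j.+1).

Lemma dprod1 : dprod 1 = 1.
Proof. by rewrite /dprod big_geq. Qed.

Lemma dprodS n : dprod n.+2 = dprod n.+1 * d n.+2.
Proof. by rewrite /dprod big_nat_recr. Qed.

Lemma sqrt_dprod0 : sqrt_dprod 0 = 1.
Proof. by rewrite /sqrt_dprod big_geq. Qed.

Lemma sqrt_dprodS k : sqrt_dprod k.+1 = sqrt_dprod k * Num.sqrt (d k.+2).
Proof. by rewrite /sqrt_dprod big_nat_recr. Qed.

(* With A = x - i and p = P_.(x) this is u_k(x); with A = x + i, its conjugate. *)
Definition wseq (A : R[i]) (p : nat -> R) (k : nat) : R[i] :=
  (-1) ^+ k / (A ^+ k * (sqrt_dprod k)%:C) * (p k)%:C.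

Lemma conj_wseq (A : R[i]) p k : (wseq A p k)^*%R = wseq A^*%R p k.
Proof.
rewrite /wseq !rmorphM fmorphV !rmorphM !rmorphXn rmorphN1 /=.
by rewrite !conjC_real_complex.
Qed.

Section PositiveEntries.
Hypothesis d_gt0 : forall j, (2 <= j)%N -> 0 < d j.

Lemma sqrt_dprod_gt0 k : 0 < sqrt_dprod k.
Proof.
elim: k => [|k IH]; first by rewrite sqrt_dprod0.
by rewrite sqrt_dprodS mulr_gt0 // sqrtr_gt0 d_gt0.
Qed.

Lemma sqr_sqrt_dprod k : sqrt_dprod k ^+ 2 = dprod k.+1.
Proof.
elim: k => [|k IH]; first by rewrite sqrt_dprod0 dprod1 expr1n.
by rewrite sqrt_dprodS dprodS exprMn IH sqr_sqrtr // ltW // d_gt0.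
Qed.

Lemma tridiag_form_wseq (A B : R[i]) (p q : nat -> R) (K : nat -> R[i]) :
  A != 0 -> B != 0 -> p 0%N = 1 -> q 0%N = 1 -> K 1%N = 1 ->
  (forall n, (0 < n)%N -> K n.+1 = A * B * (d n.+1)%:C * K n + (p n * q n)%:C
      - (d n.+1)%:C * (B * (q n.-1 * p n)%:C + A * (p n.-1 * q n)%:C)) ->
  forall n, (0 < n)%N ->
  tridiag_form (wseq B q) (wseq A p) n = K n / (A ^+ n.-1 * B ^+ n.-1 * (dprod n)%:C).
Proof.
move=> A_neq0 B_neq0 p0 q0 K1 KS [//|n] _; elim: n => [|m IH].
  rewrite tridiag_form1 /wseq p0 q0 K1 dprod1 sqrt_dprod0.
  by rewrite !expr0 !mul1r !invr1 !mulr1.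
rewrite tridiag_formSS IH (KS m.+1) //= /wseq -!sqr_sqrt_dprod sqrt_dprodS.
have t_neq0 : sqrt_dprod m != 0 by rewrite gt_eqF // sqrt_dprod_gt0.
have r_neq0 : Num.sqrt (d m.+2) != 0 by rewrite gt_eqF // sqrtr_gt0 d_gt0.
have d_sqr : d m.+2 = Num.sqrt (d m.+2) ^+ 2 by rewrite sqr_sqrtr // ltW // d_gt0.
move: t_neq0 r_neq0 d_sqr; move: (sqrt_dprod m) (Num.sqrt (d m.+2)).
move=> t r t_neq0 r_neq0 ->.
have tC_neq0 : t%:C != 0 :> R[i] by rewrite fmorph_eq0.
have rC_neq0 : r%:C != 0 :> R[i] by rewrite fmorph_eq0.
rewrite !exprS !rmorphM !rmorphXn /= -signr_odd.
by case: (odd m); rewrite ?expr1 ?expr0; field;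
  rewrite tC_neq0 rC_neq0 A_neq0 B_neq0 !expf_neq0.
Qed.

End PositiveEntries.

Section ChainSequence.
Variable g : nat -> R.
Hypotheses (g1_ge0 : 0 <= g 1%N) (g1_lt1 : g 1%N < 1).
Hypothesis g_range : forall n, (2 <= n)%N -> 0 < g n /\ g n < 1.
Hypothesis dE : forall n, (1 <= n)%N -> d n.+1 = (1 - g n) * g n.+1.

Lemma chain_complement_gt0 n : (1 <= n)%N -> 0 < 1 - g n.
Proof.
case: n => [//|[_|n _]]; rewrite subr_gt0 //.
by case: (g_range (isT : (2 <= n.+2)%N)).
Qed.

Lemma chain_seq_gt0 j : (2 <= j)%N -> 0 < d j.
Proof.
case: j => [//|j] j_ge1; have [g_gt0 _] := g_range j_ge1.
by rewrite dE // mulr_gt0 ?chain_complement_gt0.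
Qed.

Lemma tridiag_form_conj_pos (v : nat -> R[i]) : v 0%N = 1 -> forall m,
  (1 - g m.+1)%:C * ((v m)^* * v m) <= tridiag_form (fun k => (v k)^*%R) v m.+1 /\
  0 < tridiag_form (fun k => (v k)^*%R) v m.+1.
Proof.
move=> v0; elim=> [|m [H_ge H_gt0]].
  rewrite tridiag_form1 /= v0 conjC1 !mulr1; split; last exact: ltr01.
  by rewrite (_ : 1 = 1%:C) // lecR lerBlDr lerDl.
have al_ge0 : 0 <= 1 - g m.+1 by rewrite ltW ?chain_complement_gt0.
have [be_gt0 be_lt1] := g_range (isT : (2 <= m.+2)%N).
rewrite tridiag_formSS /= -addrA.
have [->|b_neq0] := eqVneq (v m.+1) 0.
  by rewrite conjC0 !(mul0r, mulr0, addr0); split; first exact: ltW.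
rewrite dE // (conjC_cross_sqrtE _ _ al_ge0 (ltW be_gt0)).
set H := tridiag_form _ _ m.+1; set a := v m; set b := v m.+1.
set w := _ + _ * b; set al := 1 - g m.+1; set be := g m.+2.
have Q_ge0 : 0 <= H - al%:C * (a^* * a) by rewrite subr_ge0.
have w_ge0 : 0 <= w^* * w by rewrite mulrC mul_conjC_ge0.
have b_gt0 : 0 < (1 - be)%:C * (b^* * b).
  by rewrite mulr_gt0 ?ltcR ?subr_gt0 // mulrC mul_conjC_gt0.
have -> : H + (w^* * w - al%:C * (a^* * a) + (1 - be)%:C * (b^* * b))
  = (H - al%:C * (a^* * a) + w^* * w) + (1 - be)%:C * (b^* * b) by ring.
split; first by rewrite lerDr addr_ge0.
by rewrite ltr_pwDr // addr_ge0.
Qed.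

End ChainSequence.
End TridiagonalForm.

Section OrthogonalPolynomials.
Variables (R : realType) (c d : nat -> R).

Lemma horner_Ppoly0 x : (Ppoly c d 0).[x] = 1.
Proof. by rewrite /Ppoly /= hornerE. Qed.

Lemma PpolySS n : Ppoly c d n.+2 =
  ('X - (c n.+2)%:P) * Ppoly c d n.+1 - (d n.+2)%:P * ('X^2 + 1) * Ppoly c d n.
Proof. by []. Qed.

Lemma horner_PpolySS n x : (Ppoly c d n.+2).[x] =
  (x - c n.+2) * (Ppoly c d n.+1).[x] - d n.+2 * (x ^+ 2 + 1) * (Ppoly c d n).[x].
Proof. by rewrite PpolySS !hornerE. Qed.

Lemma horner_deriv_PpolySS n x : (Ppoly c d n.+2)^`().[x] =
  (Ppoly c d n.+1).[x] + (x - c n.+2) * (Ppoly c d n.+1)^`().[x]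
  - d n.+2 * (2 * x * (Ppoly c d n).[x] + (x ^+ 2 + 1) * (Ppoly c d n)^`().[x]).
Proof. by rewrite PpolySS !derivE !hornerE /=; ring. Qed.

Lemma Gker1 x y : x != y -> Gker c d 1 x y = 1.
Proof.
by move=> neq_xy; rewrite /Gker /= !hornerE; field; rewrite subr_eq0.
Qed.

Lemma calG1 x : calG c d 1 x = 1.
Proof. by rewrite /calG /= !derivE !hornerE /= subr0. Qed.

Lemma Gker_recC x y n : x != y -> (0 < n)%N ->
  (Gker c d n.+1 x y)%:C = (x%:C - 'i) * (y%:C + 'i) * (d n.+1)%:C * (Gker c d n x y)%:C
   + ((Ppoly c d n).[x] * (Ppoly c d n).[y])%:C
   - (d n.+1)%:C * ((y%:C + 'i) * ((Ppoly c d n.-1).[y] * (Ppoly c d n).[x])%:C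
       + (x%:C - 'i) * ((Ppoly c d n.-1).[x] * (Ppoly c d n).[y])%:C).
Proof.
move=> neq_xy; case: n => [//|m] _; have xy_neq0 : x - y != 0 by rewrite subr_eq0.
by rewrite /Gker /= !horner_PpolySS; apply: complex_kernel_rec; field.
Qed.

Lemma calG_recC x n : (0 < n)%N ->
  (calG c d n.+1 x)%:C = (x%:C - 'i) * (x%:C + 'i) * (d n.+1)%:C * (calG c d n x)%:C
   + ((Ppoly c d n).[x] * (Ppoly c d n).[x])%:C
   - (d n.+1)%:C * ((x%:C + 'i) * ((Ppoly c d n.-1).[x] * (Ppoly c d n).[x])%:C
       + (x%:C - 'i) * ((Ppoly c d n.-1).[x] * (Ppoly c d n).[x])%:C).
Proof.
case: n => [//|m] _.
by rewrite /calG /= !horner_PpolySS horner_deriv_PpolySS; apply: complex_kernel_rec; ring.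
Qed.

Lemma herm_form_tridiag n x y :
  herm_form (uvec c d n y) (Bmat d n) (uvec c d n x) =
  tridiag_form d (fun k => (ufun c d k y)^*%R) (ufun c d ^~ x) n.
Proof.
rewrite /herm_form /tridiag_form big_mkord mxE; apply: eq_bigr => l _.
rewrite big_mkord mxE big_distrl /=; apply: eq_bigr => k _.
by rewrite !mxE.
Qed.

Lemma ufun_wseq k x :
  ufun c d k x = wseq d (x%:C - 'i) (fun j => (Ppoly c d j).[x]) k.
Proof.
case: k => [|k] //.
by rewrite /wseq sqrt_dprod0 horner_Ppoly0 !expr0 !mul1r invr1 mulr1.
Qed.

Lemma herm_form_wseq n x y :
  herm_form (uvec c d n y) (Bmat d n) (uvec c d n x) =
  tridiag_form d (wseq d (y%:C + 'i) (fun j => (Ppoly c d j).[y]))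
                 (wseq d (x%:C - 'i) (fun j => (Ppoly c d j).[x])) n.
Proof.
rewrite herm_form_tridiag /tridiag_form; apply: eq_bigr => l _; apply: eq_bigr => k _.
by rewrite !ufun_wseq conj_wseq rmorphB /= conjCi opprK conjC_real_complex.
Qed.

Lemma herm_form_kernel (K : nat -> R[i]) x y :
  (forall j, (2 <= j)%N -> 0 < d j) -> K 1%N = 1 ->
  (forall n, (0 < n)%N ->
     K n.+1 = (x%:C - 'i) * (y%:C + 'i) * (d n.+1)%:C * K n
      + ((Ppoly c d n).[x] * (Ppoly c d n).[y])%:C
      - (d n.+1)%:C * ((y%:C + 'i) * ((Ppoly c d n.-1).[y] * (Ppoly c d n).[x])%:C
          + (x%:C - 'i) * ((Ppoly c d n.-1).[x] * (Ppoly c d n).[y])%:C)) ->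
  forall n, (0 < n)%N ->
  herm_form (uvec c d n y) (Bmat d n) (uvec c d n x)
  = K n / ((x%:C - 'i) ^+ n.-1 * (y%:C + 'i) ^+ n.-1 * (dprod d n)%:C).
Proof.
move=> d_gt0 K1 KS n n_gt0; rewrite herm_form_wseq.
by apply: tridiag_form_wseq; rewrite ?real_complex_subi_neq0 ?real_complex_addi_neq0
  ?horner_Ppoly0.
Qed.

End OrthogonalPolynomials.

Theorem theorem3p1 (R : realType) (c d : nat -> R) :
  positive_chain_seq d ->
  (forall x y : R, x != y -> Gker c d 1 x y = 1) /\
  (forall (n : nat) (x y : R), (2 <= n)%N -> x != y ->
     (Gker c d n x y)%:C /
       ((x%:C - 'i) ^+ n.-1 * (y%:C + 'i) ^+ n.-1 *
        (\prod_(2 <= j < n.+1) d j)%:C)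
     = herm_form (uvec c d n y) (Bmat d n) (uvec c d n x)) /\
  (forall (n : nat) (x : R), (2 <= n)%N ->
     (calG c d n x)%:C /
       (((x ^+ 2 + 1) ^+ n.-1) * \prod_(2 <= j < n.+1) d j)%:C
     = herm_form (uvec c d n x) (Bmat d n) (uvec c d n x) /\
     0 < herm_form (uvec c d n x) (Bmat d n) (uvec c d n x)).
Proof.
move=> [g [g1_ge0 g1_lt1 g_range dE]].
have d_gt0 := chain_seq_gt0 g1_lt1 g_range dE.
split; first exact: Gker1.
split=> [n x y n_ge2 neq_xy|n x n_ge2].
  rewrite (herm_form_kernel (K := fun n => (Gker c d n x y)%:C)) ?Gker1 ?rmorph1 //.
    by move=> k; apply: Gker_recC.
  exact: ltnW.
have -> : (((x ^+ 2 + 1) ^+ n.-1) * \prod_(2 <= j < n.+1) d j)%:C =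
    (x%:C - 'i) ^+ n.-1 * (x%:C + 'i) ^+ n.-1 * (dprod d n)%:C :> R[i].
  by rewrite -exprMn -real_complex_sqrD1 -rmorphXn -rmorphM.
split.
  rewrite (herm_form_kernel (K := fun n => (calG c d n x)%:C)) ?calG1 ?rmorph1 //.
    by move=> k; apply: calG_recC.
  exact: ltnW.
case: n n_ge2 => [//|m] _; rewrite herm_form_tridiag.
by case: (tridiag_form_conj_pos g1_ge0 g1_lt1 g_range dE (v := ufun c d ^~ x) erefl m).
Qed.
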